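(* Let $n\ge 3$, let $F$ be a set of edges of $Q_n$, and let $T$ be a proper subset of the vertex set of $Q_n$ with $|T|\ge 3$ such that every edge of $Q_n$ joining a vertex of parity 0 in $T$ to a vertex outside $T$ belongs to $F$. If $|T|_0>|T|_1$, then $F$ is not minimal.
   Context: $Q_n$ is the $n$-dimensional hypercube on the binary strings of length $n$, two strings adjacent iff they differ in exactly one bit. The parity of a vertex is the number of ones in its label modulo 2. For a set $T$ of vertices, $|T|_0$ and $|T|_1$ denote the numbers of vertices of parity 0 and parity 1 in $T$. $F$ is a set of ''faulty'' edges; $Q_n-F$ is the graph with all vertices of $Q_n$ and the edges of $Q_n$ not in $F$. ''$F$ is not minimal'' means that there is a proper subset $F'\subsetneq F$ such that $Q_n-F'$ has no Hamiltonian cycle. *)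

From mathcomp Require Import all_boot.
Set Implicit Arguments. Unset Strict Implicit. Unset Printing Implicit Defensive.

Definition vtx (n : nat) := {ffun 'I_n -> bool}.

Definition qadj (n : nat) : rel (vtx n) :=
  fun u v => #|[set i | u i != v i]| == 1.

Definition qedges (n : nat) : {set {set vtx n}} :=
  [set E | [exists u, exists v, qadj u v && (E == [set u; v])]].

Definition parity (n : nat) (u : vtx n) : bool := odd #|[set i | u i]|.

Definition cardT0 (n : nat) (T : {set vtx n}) := #|[set u in T | ~~ parity u]|.
Definition cardT1 (n : nat) (T : {set vtx n}) := #|[set u in T | parity u]|.

Definition qadj_minus (n : nat) (F : {set {set vtx n}}) : rel (vtx n) :=
  fun u v => qadj u v && ([set u; v] \notin F).

Definition ham_cycle (V : finType) (e : rel V) (c : seq V) : Prop :=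
  [/\ uniq c, cycle e c, 2 < size c & forall x : V, x \in c].

Definition hamiltonian (V : finType) (e : rel V) : Prop :=
  exists c : seq V, ham_cycle e c.

Definition not_minimal (n : nat) (F : {set {set vtx n}}) : Prop :=
  exists F' : {set {set vtx n}}, F' \proper F /\ ~ hamiltonian (qadj_minus F').

(* Call an edge leaving if it joins a vertex of parity 0 in T to a vertex outside T.  Every
   injective map sending each vertex to a neighbour must move some vertex of parity 0 in T out
   of T: otherwise it would embed the parity-0 part of T into its parity-1 part, as adjacent
   vertices have opposite parities.  The successor and the predecessor maps of a Hamiltonian
   cycle are such maps, and they produce two different leaving edges on the cycle.  All leaving
   edges lie in F, so removing a single leaving edge e from F yields a proper subset F' of F
   for which Q_n - F' still has at most one leaving edge, hence no Hamiltonian cycle. *)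

From mathcomp Require Import all_boot.
Set Implicit Arguments. Unset Strict Implicit. Unset Printing Implicit Defensive.

Lemma next_prev_neq (T : eqType) (c : seq T) x :
  uniq c -> 2 < size c -> x \in c -> next c x != prev c x.
Proof.
move=> Uc c_gt2 xc; apply/eqP => nx_px.
have [i s c_rot] := rot_to xc.
have /(congr1 (next c)) := nx_px; rewrite next_prev //.
rewrite -(next_rot i Uc) -(next_rot i Uc) c_rot.
move: c_gt2 Uc; rewrite -(size_rot i) -(rot_uniq i) c_rot.
case: s {c_rot} => [|y [|z s]] //= _; rewrite !inE eqxx /= eqxx.
case/and3P => /norP[/negbTE xy /norP[xz _]] _ _; rewrite eq_sym xy => zx.
by rewrite zx eqxx in xz.
Qed.

Lemma set2_sep (T : finType) (A : {set T}) (a b c d : T) :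
  a \in A -> b \notin A -> c \notin A -> d \in A ->
  [set a; b] = [set c; d] -> a = d /\ b = c.
Proof.
move=> aA bA cA dA ab_cd.
have /set2P[ac | ->] : a \in [set c; d] by rewrite -ab_cd set21.
  by move: cA; rewrite -ac aA.
have /set2P[-> // | bd] : b \in [set c; d] by rewrite -ab_cd set22.
by move: bA; rewrite bd dA.
Qed.

Section Hypercube.

Variable n : nat.
Implicit Types (u v : vtx n) (j : 'I_n).

Definition flip u j : vtx n := [ffun i => if i == j then ~~ u i else u i].

Lemma flipK j : involutive (flip ^~ j).
Proof. by move=> u; apply/ffunP => i; rewrite !ffunE; case: eqP; rewrite ?negbK. Qed.

Lemma qadjP u v : reflect (exists j, v = flip u j) (qadj u v).
Proof.
apply: (iffP cards1P) => [[j /setP uv_j] | [j ->]]; exists j.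
  apply/ffunP => i; move: (uv_j i); rewrite !inE ffunE.
  by case: (i == j); case: (u i); case: (v i).
by apply/setP => i; rewrite !inE ffunE; case: (i == j); case: (u i).
Qed.

Lemma qadj_sym : symmetric (@qadj n).
Proof. by move=> u v; congr (_ == 1); apply: eq_card => i; rewrite !inE eq_sym. Qed.

Lemma qadj_minus_sym (F : {set {set vtx n}}) : symmetric (qadj_minus F).
Proof. by move=> u v; rewrite /qadj_minus qadj_sym setUC. Qed.

Lemma parity_flip u j : parity (flip u j) = ~~ parity u.
Proof.
rewrite /parity; case uj: (u j).
- have -> : [set i | flip u j i] = [set i | u i] :\ j.
    by apply/setP => i; rewrite !inE ffunE; case: (i =P j) => [->|]; rewrite ?uj.
  by rewrite [in RHS](cardsD1 j) inE uj negbK.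
- have -> : [set i | flip u j i] = j |: [set i | u i].
    by apply/setP => i; rewrite !inE ffunE; case: (i =P j) => [->|]; rewrite ?uj ?eqxx.
  by rewrite cardsU1 inE uj.
Qed.

Lemma parity_adj u v : qadj u v -> parity v = ~~ parity u.
Proof. by case/qadjP => j ->; exact: parity_flip. Qed.

Variable T : {set vtx n}.
Hypothesis T1_lt_T0 : cardT1 T < cardT0 T.

Definition leaving u v := [&& u \in T, ~~ parity u & v \notin T].

Lemma exists_leaving (f : vtx n -> vtx n) :
  injective f -> (forall u, qadj u (f u)) -> exists u, leaving u (f u).
Proof.
move=> f_inj f_adj; apply/existsP; apply: contraLR T1_lt_T0 => /existsPn stay.
rewrite -leqNgt /cardT0 /cardT1 -(card_imset _ f_inj).
apply/subset_leq_card/subsetP => _ /imsetP[u + ->].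
rewrite inE => /andP[uT u_even].
have := stay u; rewrite /leaving uT u_even /= negbK => fuT.
by rewrite inE fuT (parity_adj (f_adj u)) u_even.
Qed.

Lemma ham_cycle_leaving_edges (e : rel (vtx n)) (c : seq (vtx n)) :
  subrel e (@qadj n) -> symmetric e -> ham_cycle e c ->
  exists u v, [/\ leaving u (next c u), leaving v (prev c v)
                & [set u; next c u] != [set v; prev c v]].
Proof.
move=> e_qadj e_sym [Uc Cc c_gt2 c_all].
have [u lv_u] := exists_leaving (can_inj (prev_next Uc))
  (fun u => e_qadj _ _ (next_cycle Cc (c_all u))).
have [v lv_v] := exists_leaving (can_inj (next_prev Uc))
  (fun v => e_qadj _ _ (etrans (e_sym _ _) (prev_cycle Cc (c_all v)))).
exists u, v; split=> //; apply/eqP => same_edge.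
case/and3P: lv_u => uT _ nuT; case/and3P: lv_v => vT _ pvT.
have [<- nu_pu] := set2_sep uT nuT pvT vT (etrans same_edge (setUC _ _)).
by move: (next_prev_neq Uc c_gt2 (c_all u)); rewrite nu_pu eqxx.
Qed.

Lemma not_hamiltonian_one_leaving_edge (F : {set {set vtx n}}) (e0 : {set vtx n}) :
  (forall u v, leaving u v -> qadj u v -> [set u; v] != e0 -> [set u; v] \in F) ->
  ~ hamiltonian (qadj_minus F).
Proof.
move=> leaving_inF [c c_ham]; have [Uc Cc _ c_all] := c_ham.
have leaving_is_e0 u v : leaving u v -> qadj_minus F u v -> [set u; v] = e0.
  move=> lv_uv /andP[uv_adj]; apply: contraNeq => uv_e0; exact: leaving_inF.
have [u [v [lv_u lv_v]]] :=
  ham_cycle_leaving_edges (fun x y xy => (andP xy).1) (qadj_minus_sym F) c_ham.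
rewrite (leaving_is_e0 _ _ lv_u (next_cycle Cc (c_all u))).
rewrite (leaving_is_e0 _ _ lv_v) ?eqxx // qadj_minus_sym.
exact: prev_cycle Cc (c_all v).
Qed.

End Hypercube.

Theorem lemma4 (n : nat) (F : {set {set vtx n}}) (T : {set vtx n}) :
  3 <= n ->
  F \subset qedges n ->
  T \proper [set: vtx n] ->
  3 <= #|T| ->
  (forall u v : vtx n, u \in T -> ~~ parity u -> v \notin T -> qadj u v ->
     [set u; v] \in F) ->
  cardT1 T < cardT0 T ->
  not_minimal F.
Proof.
move=> n_ge3 _ _ _ leaving_inF T1_lt_T0.
have j0 : 'I_n by exists 0; apply: leq_trans n_ge3.
have flip_adj u : qadj u (flip u j0) by apply/qadjP; exists j0.
have [u0 /and3P[u0T u0_even fu0T]] :=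
  exists_leaving T1_lt_T0 (can_inj (flipK j0)) flip_adj.
set e := [set u0; flip u0 j0].
exists (F :\ e); split; first by apply: properD1; exact: leaving_inF.
apply: (not_hamiltonian_one_leaving_edge (e0 := e) T1_lt_T0) => u v /and3P[uT u_even vT] uv_adj ne.
by rewrite in_setD1 ne leaving_inF.
Qed.
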